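(* Let $N\ge 3$, let $a>0$, $b>0$, and let $g:\mathbb{R}\to\mathbb{R}$ be continuous. A function $u\in C^2(\mathbb{R}^N)\cap\mathcal{D}^{1,2}(\mathbb{R}^N)$ is a solution of $$-\Big(a+b\int_{\mathbb{R}^N}|\nabla u|^2\Big)\Delta u=g(u)\quad\text{in }\mathbb{R}^N$$ if and only if there exist $v\in C^2(\mathbb{R}^N)\cap\mathcal{D}^{1,2}(\mathbb{R}^N)$ solving $$-\Delta v=g(v)\quad\text{in }\mathbb{R}^N$$ and $t>0$ such that $t^2a+t^{4-N}b\int_{\mathbb{R}^N}|\nabla v|^2=1$ and $u(x)=v(tx)$ for all $x\in\mathbb{R}^N$.
   Context: $\mathcal{D}^{1,2}(\mathbb{R}^N)$ denotes the completion of $C_c^\infty(\mathbb{R}^N)$ with respect to the norm $\left(\int_{\mathbb{R}^N}|\nabla u|^2\right)^{1/2}$. Solutions are understood in the classical (pointwise) sense. *)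

From HB Require Import structures.
From mathcomp Require Import all_boot all_order all_algebra.
From mathcomp Require Import all_classical all_reals all_analysis.

Set Implicit Arguments.
Unset Strict Implicit.
Unset Printing Implicit Defensive.

Import Order.TTheory GRing.Theory Num.Theory.
Import numFieldNormedType.Exports.

Local Open Scope classical_set_scope.
Local Open Scope ring_scope.

(* Points of R^N are row vectors 'rV[R]_N (normed with the max norm, which
   induces the usual topology; only the topology matters below). *)

Definition ebasis {R : realType} (N : nat) (i : 'I_N) : 'rV[R]_N := delta_mx 0 i.

Definition partial {R : realType} (N : nat) (i : 'I_N) (f : 'rV[R]_N -> R)
  : 'rV[R]_N -> R := fun x => 'D_(ebasis i) f x.

Fixpoint dpart {R : realType} (N : nat) (s : seq 'I_N) (f : 'rV[R]_N -> R)
  : 'rV[R]_N -> R :=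
  match s with
  | [::] => f
  | i :: s' => partial i (dpart s' f)
  end.

Definition C2 {R : realType} (N : nat) (u : 'rV[R]_N -> R) : Prop :=
  continuous u /\
  (forall i x, derivable u x (ebasis i)) /\
  (forall i, continuous (partial i u)) /\
  (forall i j x, derivable (partial i u) x (ebasis j)) /\
  (forall i j, continuous (partial j (partial i u))).

Definition smooth {R : realType} (N : nat) (u : 'rV[R]_N -> R) : Prop :=
  forall s : seq 'I_N,
    continuous (dpart s u) /\ forall i x, derivable (dpart s u) x (ebasis i).

Definition Cc_infty {R : realType} (N : nat) (u : 'rV[R]_N -> R) : Prop :=
  smooth u /\ exists r : R, forall x, r < `|x| -> u x = 0.

Definition laplacian {R : realType} (N : nat) (u : 'rV[R]_N -> R) : 'rV[R]_N -> R :=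
  fun x => \sum_(i < N) partial i (partial i u) x.

Definition grad_sq {R : realType} (N : nat) (u : 'rV[R]_N -> R) : 'rV[R]_N -> R :=
  fun x => \sum_(i < N) (partial i u x) ^+ 2.

(* Lebesgue integral over R^N of a nonnegative function, computed as an
   iterated integral of one-dimensional Lebesgue integrals (Tonelli). *)
Fixpoint iint {R : realType} (n : nat) : ('rV[R]_n -> \bar R) -> \bar R :=
  match n with
  | 0 => fun f => f 0
  | n'.+1 => fun f =>
      (\int[@lebesgue_measure R]_(x in [set: R])
          iint (fun y : 'rV[R]_n' => f (row_mx (const_mx x : 'rV[R]_1) y)))%E
  end.

Definition dirichlet {R : realType} (N : nat) (u : 'rV[R]_N -> R) : \bar R :=
  iint (fun x => (grad_sq u x)%:E).

(* u belongs to D^{1,2}(R^N), the completion of C_c^infty(R^N) for the norm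
   (\int |grad .|^2)^{1/2}: u is the limit of a sequence of test functions
   phi_k, with grad phi_k -> grad u in L^2 and phi_k -> u pointwise. *)
Definition D12 {R : realType} (N : nat) (u : 'rV[R]_N -> R) : Prop :=
  exists phi : nat -> 'rV[R]_N -> R,
    (forall k, Cc_infty (phi k)) /\
    (forall x, (fun k => phi k x) @ \oo --> u x) /\
    ((fun k => dirichlet (fun x => phi k x - u x)) @ \oo --> 0%E).

Definition kirchhoff_sol {R : realType} (N : nat) (a b : R) (g : R -> R)
  (u : 'rV[R]_N -> R) : Prop :=
  forall x, - (a + b * fine (dirichlet u)) * laplacian u x = g (u x).

Definition local_sol {R : realType} (N : nat) (g : R -> R)
  (v : 'rV[R]_N -> R) : Prop :=
  forall x, - laplacian v x = g (v x).

From HB Require Import structures.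
From mathcomp Require Import all_boot all_order all_algebra.
From mathcomp Require Import all_classical all_reals all_analysis.
From mathcomp Require Import measurable_realfun ring.

Import Order.TTheory GRing.Theory Num.Theory.
Import numFieldNormedType.Exports.
Local Open Scope ring_scope.

Set Implicit Arguments.
Unset Strict Implicit.
Unset Printing Implicit Defensive.

(* The two equations are exchanged by a dilation x |-> s x, which preserves
   C^2 and D^{1,2}, multiplies the Laplacian by s^2 and the Dirichlet integral
   by s^(2-N).  If u solves the Kirchhoff equation and s^2 = a + b \int |grad u|^2,
   then v := u(s .) solves -Delta v = g(v) and t := 1/s satisfies the
   normalisation; conversely the normalisation says precisely that the Kirchhoff
   coefficient of u = v(t .) cancels the factor t^2 produced by the Laplacian. *)

Section lebesgue_dilation.
Local Open Scope classical_set_scope.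
Local Open Scope ring_scope.
Variable R : realType.

Let measurable_mulr (c : R) :
  @measurable_fun _ _ (measurableTypeR R) (measurableTypeR R) setT (fun x => x * c) :=
  mulrr_measurable c.

Lemma preimage_mulr_itv_oc (c x y : R) : 0 < c ->
  (fun z => z * c) @^-1` [set` `]x, y]] = [set` `]x / c, y / c]].
Proof.
move=> c0; apply/seteqP; split => z /=; rewrite !in_itv /=.
  by move=> /andP[? ?]; rewrite ltr_pdivrMr // ler_pdivlMr //; apply/andP.
by rewrite ltr_pdivrMr // ler_pdivlMr.
Qed.

Lemma lebesgue_measure_preimage_mulr (c : R) (A : set (measurableTypeR R)) :
  0 < c -> measurable A ->
  lebesgue_measure ((fun x => x * c) @^-1` A) = ((c^-1)%:E * lebesgue_measure A)%E.
Proof.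
move=> c0 mA.
pose lambda_c := measure_function_pushforward__canonical__measure_function_Measure
  lebesgue_measure (measurable_mulr c).
pose mu : {measure set (measurableTypeR R) -> \bar R} := mscale (NngNum (ltW c0)) lambda_c.
suff -> : lebesgue_measure A = mu A.
  by rewrite /mu /mscale /= muleA -EFinM mulVf ?gt_eqF // mul1e.
apply: (@lebesgue_measure_unique R mu) mA => _ [[x y] _ <-].
rewrite /mu /lambda_c /= /mscale /= /pushforward preimage_mulr_itv_oc //.
rewrite !lebesgue_measure_itv /= !lte_fin.
rewrite ltr_pdivrMr // divfK ?gt_eqF //; case: ifP => _; last by rewrite mule0.
by rewrite -EFinD -EFinM mulrBr !(mulrC c) !divfK ?gt_eqF.
Qed.

Lemma ge0_integral_mulr (c : R) (f : R -> \bar R) : 0 < c ->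
  measurable_fun setT f -> (forall x, 0 <= f x)%E ->
  (\int[lebesgue_measure]_x f (x * c)%R = (c^-1)%:E * \int[lebesgue_measure]_x f x)%E.
Proof.
move=> c0 mf f0.
have := ge0_integral_pushforward (measurable_mulr c) lebesgue_measure measurableT mf
  (fun y _ => f0 y).
rewrite preimage_setT /= => <-.
have ci0 : 0 <= c^-1 by rewrite invr_ge0 ltW.
transitivity (\int[mscale (NngNum ci0) lebesgue_measure]_x f x)%E.
  apply: eq_measure_integral => A mA _.
  exact: lebesgue_measure_preimage_mulr.
by rewrite ge0_integral_mscale.
Qed.

(* No measurability from here on: the outer integrands of [iint] need not be
   measurable, so the library's monotonicity and linearity lemmas do not apply. *)

Local Open Scope ereal_scope.
Import HBNNSimple.

Lemma ge0_le_integralT (F G : R -> \bar R) :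
  (forall x, 0 <= F x) -> (forall x, F x <= G x) ->
  \int[lebesgue_measure]_x F x <= \int[lebesgue_measure]_x G x.
Proof.
move=> F0 FG; rewrite !ge0_integralTE // => [|x]; last exact: le_trans (FG x).
by apply: ereal_sup_le => _ [h hF <-]; exists h => //= x; exact: le_trans (FG x).
Qed.

Lemma ge0_integral_scale_mulr_le (G : R -> \bar R) (k c : R) :
  (forall x, 0 <= G x) -> (0 < k)%R -> (0 < c)%R ->
  \int[lebesgue_measure]_x (k%:E * G (x * c)%R) <=
  (k / c)%:E * \int[lebesgue_measure]_x G x.
Proof.
move=> G0 k0 c0.
rewrite ge0_integralTE; last by move=> x; rewrite mule_ge0 // lee_fin ltW.
(* A simple function h below k G(. c) yields the measurable h(. / c) / k below
   G, to which the measurable change of variables applies. *)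
apply: ge_ereal_sup => _ [h /= hG <-]; rewrite -integralT_nnsfun.
pose f x := (k^-1 * h (x / c))%:E.
have mf : measurable_fun setT f.
  apply/measurable_EFinP/measurable_funM => //.
  exact: measurableT_comp (measurable_funP h) (mulrr_measurable c^-1).
have f0 x : 0 <= f x by rewrite lee_fin mulr_ge0 // invr_ge0 ltW.
have -> : \int[lebesgue_measure]_x (h x)%:E =
          \int[lebesgue_measure]_x (k%:E * f (x * c)%R).
  by apply: eq_integral => x _; rewrite /f -EFinM mulrA mulfV ?gt_eqF // mul1r mulfK ?gt_eqF.
rewrite ge0_integralZl //; last 2 first.
- exact: measurableT_comp mf (mulrr_measurable c).
- by rewrite lee_fin ltW.
rewrite ge0_integral_mulr // muleA -EFinM lee_pmul2l ?fin_numE ?lte_fin ?divr_gt0 //.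
apply: ge0_le_integralT => // x.
rewrite -(@lee_pmul2l _ k%:E) ?fin_numE ?lte_fin // /f EFinM muleA -EFinM.
by rewrite mulfV ?gt_eqF // mul1r; have := hG (x / c)%R; rewrite divfK ?gt_eqF.
Qed.

Lemma ge0_integral_scale_mulr (G : R -> \bar R) (k c : R) :
  (forall x, 0 <= G x) -> (0 < k)%R -> (0 < c)%R ->
  \int[lebesgue_measure]_x (k%:E * G (x * c)%R) =
  (k / c)%:E * \int[lebesgue_measure]_x G x.
Proof.
move=> G0 k0 c0; apply/eqP; rewrite eq_le ge0_integral_scale_mulr_le //=.
have kG0 x : 0 <= k%:E * G (x * c)%R by rewrite mule_ge0 // lee_fin ltW.
have ki0 : (0 < k^-1)%R by rewrite invr_gt0.
have ci0 : (0 < c^-1)%R by rewrite invr_gt0.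
have := ge0_integral_scale_mulr_le kG0 ki0 ci0.
under eq_integral do rewrite muleA -EFinM mulVf ?gt_eqF // mul1e divfK ?gt_eqF //.
rewrite invrK mulrC => le_G.
rewrite -(@lee_pmul2l _ (c / k)%:E) ?fin_numE ?lte_fin ?divr_gt0 //.
by rewrite muleA -EFinM mulrA divfK ?gt_eqF // mulfV ?gt_eqF // mul1e.
Qed.

End lebesgue_dilation.

Definition dilate (R : pzRingType) (V : lmodType R) (T : Type) (s : R) (f : V -> T) :
  V -> T := fun y => f (s *: y).

Section dilate_derive.
Local Open Scope classical_set_scope.
Local Open Scope ring_scope.
Variables (R : numFieldType) (V W : normedModType R).
Implicit Types (f : V -> W) (s : R).

Lemma continuous_dilate (T : topologicalType) s (f : V -> T) :
  continuous f -> continuous (dilate s f).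
Proof.
by move=> cf x; apply: continuous_comp (@scaler_continuous _ _ s x) _; exact: cf.
Qed.

Lemma cvg_mulr_dnbhs0 s : s != 0 -> (fun h : R => h * s) @ 0^' --> (0 : R)^'.
Proof.
move=> s0 P /= [e /= e0 eP].
exists (e / `|s|) => [/=|y /= ys y0]; first by rewrite divr_gt0 // normr_gt0.
apply: eP; last by rewrite mulf_neq0.
by move: ys; rewrite /ball /= !sub0r !normrN normrM ltr_pdivlMr ?normr_gt0.
Qed.

Lemma is_derive_dilate f s x v : s != 0 -> derivable f (s *: x) v ->
  is_derive x v (dilate s f) (s *: 'D_v f (s *: x)).
Proof.
move=> s0 df.
set q := fun h : R => h^-1 *: ((f \o shift (s *: x)) (h *: v) - f (s *: x)).
have E : (fun h : R => h^-1 *: ((dilate s f \o shift x) (h *: v) - dilate s f x)) =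
          (fun h => s *: q (h * s)).
  apply/funext => h; rewrite /q /dilate /= scalerA invfM mulrCA mulfV // mulr1.
  by congr (_ *: (f _ - _)); rewrite scalerDr scalerA (mulrC s).
have qs : (fun h => s *: q (h * s)) @ 0^' --> s *: 'D_v f (s *: x).
  by apply: cvgZl_tmp; exact: cvg_comp (cvg_mulr_dnbhs0 s0) df.
apply: DeriveDef; first by apply/cvg_ex; exists (s *: 'D_v f (s *: x)); rewrite /derivable E.
by rewrite /derive E (cvg_lim _ qs).
Qed.

Lemma derivable_dilate f s x v : s != 0 ->
  derivable f (s *: x) v -> derivable (dilate s f) x v.
Proof. by move=> s0 /(is_derive_dilate s0) []. Qed.

Lemma derive_dilate f s x v : s != 0 ->
  derivable f (s *: x) v -> 'D_v (dilate s f) x = s *: 'D_v f (s *: x).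
Proof. by move=> s0 /(is_derive_dilate s0) []. Qed.

End dilate_derive.

Section dilate_partial.
Variables (R : realType) (N : nat).
Implicit Types (f u : 'rV[R]_N -> R) (s : R).

Lemma partialZ f k i : (forall x, derivable f x (ebasis i)) ->
  partial i (k \*: f) = k \*: partial i f.
Proof. by move=> df; apply/funext => x; rewrite /partial deriveZ. Qed.

Lemma partial_dilate f s i : s != 0 -> (forall x, derivable f x (ebasis i)) ->
  partial i (dilate s f) = s \*: dilate s (partial i f).
Proof. by move=> s0 df; apply/funext => x; rewrite /partial derive_dilate. Qed.

Lemma dpart_dilate f s (l : seq 'I_N) : s != 0 -> smooth f ->
  dpart l (dilate s f) = s ^+ size l \*: dilate s (dpart l f).
Proof.
move=> s0 sf; elim: l => [|i l IH] /=; first by apply/funext => y; rewrite /= expr0 scale1r.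
have dl x : derivable (dilate s (dpart l f)) x (ebasis i).
  exact: derivable_dilate s0 ((sf l).2 _ _).
rewrite IH partialZ // partial_dilate //; last exact: (sf l).2.
by apply/funext => y; rewrite /= scalerA exprSr.
Qed.

Lemma smooth_dilate f s : s != 0 -> smooth f -> smooth (dilate s f).
Proof.
move=> s0 sf l; rewrite dpart_dilate //; split => [x|i x].
  exact/continuousZl_tmp/continuous_dilate/(sf l).1.
exact/derivableZ/derivable_dilate/(sf l).2.
Qed.

Lemma Cc_infty_dilate f s : 0 < s -> Cc_infty f -> Cc_infty (dilate s f).
Proof.
move=> s0 [sf [r fr]]; split; first by apply: smooth_dilate; rewrite ?gt_eqF.
exists (r / s) => x rx; apply: fr.
by rewrite normrZ gtr0_norm // mulrC -ltr_pdivrMr.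
Qed.

Lemma C2_dilate u s : s != 0 -> C2 u -> C2 (dilate s u).
Proof.
move=> s0 [cu [du [cdu [ddu cddu]]]].
have pu i : partial i (dilate s u) = s \*: dilate s (partial i u).
  exact: partial_dilate.
split; first exact: continuous_dilate.
split; first by move=> i x; exact: derivable_dilate.
split; first by move=> i; rewrite pu => x; exact/continuousZl_tmp/continuous_dilate.
split; first by move=> i j x; rewrite pu; exact/derivableZ/derivable_dilate.
move=> i j x; rewrite pu partialZ => [|y]; last exact/derivable_dilate.
by rewrite partial_dilate //; exact/continuousZl_tmp/continuousZl_tmp/continuous_dilate.
Qed.

Lemma laplacian_dilate u s x : s != 0 -> C2 u ->
  laplacian (dilate s u) x = s ^+ 2 * laplacian u (s *: x).
Proof.
move=> s0 [_ [du [_ [ddu _]]]]; rewrite /laplacian mulr_sumr; apply: eq_bigr => i _.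
rewrite partial_dilate // partialZ => [|y]; last exact: derivable_dilate.
by rewrite partial_dilate //= scalerA expr2.
Qed.

Lemma grad_sq_dilate u s x : s != 0 -> (forall i x, derivable u x (ebasis i)) ->
  grad_sq (dilate s u) x = s ^+ 2 * grad_sq u (s *: x).
Proof.
move=> s0 du; rewrite /grad_sq mulr_sumr; apply: eq_bigr => i _.
by rewrite partial_dilate //= exprMn.
Qed.

End dilate_partial.

Section iterated_integral_dilation.
Variable R : realType.

Lemma iint_ge0 n (F : 'rV[R]_n -> \bar R) : (forall x, 0 <= F x)%E -> (0 <= iint F)%E.
Proof.
elim: n F => [|n IH] F F0 /=; first exact: F0.
by apply: integral_ge0 => x _; apply: IH.
Qed.

Lemma scale_row_mx_const n (c x : R) (y : 'rV[R]_n) :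
  c *: row_mx (const_mx x : 'rV[R]_1) y = row_mx (const_mx (x * c)) (c *: y).
Proof. by rewrite scale_row_mx; congr row_mx; apply/matrixP => i j; rewrite !mxE mulrC. Qed.

Lemma iint_dilate n (F : 'rV[R]_n -> \bar R) (k c : R) :
  (forall x, 0 <= F x)%E -> 0 < k -> 0 < c ->
  iint (fun x => k%:E * F (c *: x))%E = ((k * c^-1 ^+ n)%:E * iint F)%E.
Proof.
elim: n F k => [|n IH] F k F0 k0 c0 /=; first by rewrite scaler0 mulr1.
pose G x := iint (fun y : 'rV[R]_n => F (row_mx (const_mx x : 'rV[R]_1) y)).
have -> : (fun x => iint (fun y => k%:E * F (c *: row_mx (const_mx x : 'rV[R]_1) y)))%E =
          (fun x => (k * c^-1 ^+ n)%:E * G (x * c)%R)%E.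
  by apply/funext => x; rewrite -IH //; under eq_fun do rewrite scale_row_mx_const.
rewrite (@ge0_integral_scale_mulr _ G).
- by rewrite exprSr mulrA.
- by move=> x; exact: iint_ge0.
- by rewrite mulr_gt0 // exprn_gt0 // invr_gt0.
- by [].
Qed.

End iterated_integral_dilation.

Section dirichlet_dilation.
Variables (R : realType) (N : nat).
Implicit Types (u : 'rV[R]_N -> R) (s : R).

Lemma grad_sq_ge0 u x : 0 <= grad_sq u x.
Proof. by rewrite /grad_sq sumr_ge0 // => i _; exact: sqr_ge0. Qed.

Lemma dirichlet_ge0 u : (0 <= dirichlet u)%E.
Proof. by apply: iint_ge0 => x; rewrite lee_fin grad_sq_ge0. Qed.

Lemma dirichlet_dilate u s : 0 < s -> (forall i x, derivable u x (ebasis i)) ->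
  dirichlet (dilate s u) = ((s ^ (2 - N%:Z))%:E * dirichlet u)%E.
Proof.
move=> s0 du; rewrite /dirichlet.
under eq_fun do rewrite grad_sq_dilate ?gt_eqF // EFinM.
rewrite (@iint_dilate _ _ (fun x => (grad_sq u x)%:E)) ?exprn_gt0 // => [|x].
  by rewrite expfzDr ?gt_eqF // exprVn exprnN.
by rewrite lee_fin grad_sq_ge0.
Qed.

Lemma D12_dilate u s : 0 < s -> (forall i x, derivable u x (ebasis i)) ->
  D12 u -> D12 (dilate s u).
Proof.
move=> s0 du [phi [phiC [phi_u dphi_u]]].
exists (fun k => dilate s (phi k)); split; first by move=> k; exact: Cc_infty_dilate.
split; first by move=> x; exact: phi_u.
have dphiB k i x : derivable (fun y => phi k y - u y) x (ebasis i).
  by apply: derivableB; [exact: ((phiC k).1 [::]).2 | exact: du].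
under eq_fun do rewrite (dirichlet_dilate s0 (dphiB _)).
by rewrite -(mule0 (s ^ (2 - N%:Z))%:E); exact: cvgeZl.
Qed.

End dirichlet_dilation.

(* No sign condition on [r]: [fine] maps both infinities to 0. *)
Lemma fineEFinM (R : realDomainType) (r : R) (e : \bar R) : fine (r%:E * e)%E = r * fine e.
Proof.
case: e => [x| |] //=; rewrite mulr0; have [r0|r0|->] := ltgtP r 0.
- by rewrite lt0_muley.
- by rewrite gt0_muley.
- by rewrite mul0e.
- by rewrite lt0_muleNy.
- by rewrite gt0_muleNy.
- by rewrite mul0e.
Qed.

Section kirchhoff_rescaling.
Variables (R : realType) (N : nat) (a b : R) (g : R -> R).

Lemma kirchhoff_coef_dilate (u : 'rV[R]_N -> R) s : 0 < s ->
  (forall i x, derivable u x (ebasis i)) ->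
  s^-1 ^+ 2 * a + s^-1 ^ (4 - N%:Z) * b * fine (dirichlet (dilate s u)) =
  (a + b * fine (dirichlet u)) / s ^+ 2.
Proof.
move=> s0 du; rewrite dirichlet_dilate // fineEFinM.
have e : s^-1 ^ (4 - N%:Z) * s ^ (2 - N%:Z) = s^-1 ^+ 2.
  rewrite exprz_inv -expfzDr ?gt_eqF //.
  have -> : - (4 - N%:Z) + (2 - N%:Z) = - 2%:Z by ring.
  by rewrite -exprz_inv.
by rewrite -exprVn -e; ring.
Qed.

Lemma kirchhoff_sol_dilate (v : 'rV[R]_N -> R) t : 0 < t -> C2 v ->
  t ^+ 2 * a + t ^ (4 - N%:Z) * b * fine (dirichlet v) = 1 ->
  kirchhoff_sol a b g (dilate t v) <-> local_sol g v.
Proof.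
move=> t0 v2 tv1; have [_ [dv _]] := v2.
have coefE x : - (a + b * fine (dirichlet (dilate t v))) * laplacian (dilate t v) x =
               - laplacian v (t *: x).
  rewrite laplacian_dilate ?gt_eqF // dirichlet_dilate // fineEFinM -[RHS]mul1r -tv1.
  have -> : t ^ (4 - N%:Z) = t ^+ 2 * t ^ (2 - N%:Z).
    by rewrite -[t ^+ 2]/(t ^ 2%:Z) -expfzDr ?gt_eqF //; congr (_ ^ _); ring.
  ring.
split => sol x; last by rewrite coefE sol.
by have := sol (t^-1 *: x); rewrite coefE /dilate scalerA mulfV ?gt_eqF // scale1r.
Qed.

End kirchhoff_rescaling.

Unset Implicit Arguments.

Theorem theorem1p1 (R : realType) (N : nat) (a b : R) (g : R -> R)
  (HN : (3 <= N)%N) (Ha : 0 < a) (Hb : 0 < b) (Hg : continuous g)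
  (u : 'rV[R]_N -> R) (Hu2 : C2 u) (HuD : D12 u) :
  kirchhoff_sol a b g u <->
  exists (v : 'rV[R]_N -> R) (t : R),
    [/\ C2 v, D12 v & local_sol g v] /\
    [/\ 0 < t,
        t ^+ 2 * a + t ^ (4 - (N : int)) * b * fine (dirichlet v) = 1
        & forall x, u x = v (t *: x)].
Proof.
split=> [Ku|[v [t [[v2 _ Lv] [t0 tv1 uv]]]]]; last first.
  have -> : u = dilate t v by apply/funext => x; exact: uv.
  exact: (kirchhoff_sol_dilate g t0 v2 tv1).2 Lv.
have [_ [du _]] := Hu2.
have D0 := fine_ge0 (dirichlet_ge0 u).
have c0 : 0 < a + b * fine (dirichlet u) by rewrite ltr_pwDl // mulr_ge0 // ltW.
set s := Num.sqrt (a + b * fine (dirichlet u)).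
have s0 : 0 < s by rewrite sqrtr_gt0.
have si0 : 0 < s^-1 by rewrite invr_gt0.
have uE : u = dilate s^-1 (dilate s u).
  by apply/funext => x; rewrite /dilate scalerA mulfV ?gt_eqF // scale1r.
have sv1 : s^-1 ^+ 2 * a + s^-1 ^ (4 - N%:Z) * b * fine (dirichlet (dilate s u)) = 1.
  by rewrite kirchhoff_coef_dilate // sqr_sqrtr ?ltW // divff ?gt_eqF.
have v2 : C2 (dilate s u) by apply: C2_dilate; rewrite ?gt_eqF.
exists (dilate s u), s^-1; split; split => //.
- exact: D12_dilate.
- by apply/(kirchhoff_sol_dilate g si0 v2 sv1); rewrite -uE; exact: Ku.
- by rewrite {1}uE.
Qed.
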